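(* Each (s)-set is the union of countably many DC graphs.
   Context: A function on an open interval is DC if it is the difference of two convex functions. A function defined on a nonempty set $D\subset\mathbb{R}$ is DCR if it is the restriction of a DC function defined on $\mathbb{R}$. A nonempty closed set $S\subset\mathbb{R}^2$ is an (s)-set if there exists $r>0$ such that (a) $S\subset\bigcup_{i=1}^k\operatorname{graph} f_i$ for some DCR functions $f_i:[0,r]\to\mathbb{R}$ with $f_i(0)=(f_i)'_+(0)=0$, and (b) $S=\bigcup_{h\in H}\operatorname{graph} h$ for some family $H$ of continuous functions on $[0,r]$. A set $P\subset\mathbb{R}^2$ is a DC graph if it is a rotated copy (rotation around the origin) of $\operatorname{graph} f$ for a DCR function $f$ on some nonempty compact (possibly degenerate) interval $I\subset\mathbb{R}$. *)

From Stdlib Require Import Reals.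
Open Scope R_scope.

Definition convex_R (g : R -> R) : Prop :=
  forall x y t, 0 <= t <= 1 ->
    g (t * x + (1 - t) * y) <= t * g x + (1 - t) * g y.

Definition DC_R (F : R -> R) : Prop :=
  exists g h : R -> R, convex_R g /\ convex_R h /\ forall x, F x = g x - h x.

Definition DCR_on (D : R -> Prop) (f : R -> R) : Prop :=
  exists F : R -> R, DC_R F /\ forall x, D x -> f x = F x.

Definition Icc (a b : R) : R -> Prop := fun x => a <= x <= b.

Definition graph_on (D : R -> Prop) (f : R -> R) : R * R -> Prop :=
  fun p => D (fst p) /\ snd p = f (fst p).

Definition continuous_on_Icc (a b : R) (h : R -> R) : Prop :=
  forall x, a <= x <= b -> forall eps, 0 < eps -> exists delta, 0 < delta /\
    forall y, a <= y <= b -> Rabs (y - x) < delta -> Rabs (h y - h x) < eps.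

Definition right_deriv0_zero (r : R) (f : R -> R) : Prop :=
  forall eps, 0 < eps -> exists delta, 0 < delta /\
    forall t, 0 < t -> t < delta -> t <= r -> Rabs ((f t - f 0) / t) < eps.

Definition closed2 (S : R * R -> Prop) : Prop :=
  forall p, ~ S p -> exists e, 0 < e /\
    forall q, (fst q - fst p) ^ 2 + (snd q - snd p) ^ 2 < e ^ 2 -> ~ S q.

Definition s_set (S : R * R -> Prop) : Prop :=
  (exists p, S p) /\ closed2 S /\
  exists r, 0 < r /\
    (exists (k : nat) (f : nat -> R -> R),
        (forall i, (i < k)%nat ->
           DCR_on (Icc 0 r) (f i) /\ f i 0 = 0 /\ right_deriv0_zero r (f i)) /\
        (forall p, S p -> exists i, (i < k)%nat /\ graph_on (Icc 0 r) (f i) p)) /\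
    (exists H : (R -> R) -> Prop,
        (forall h, H h -> continuous_on_Icc 0 r h) /\
        (forall p, S p <-> exists h, H h /\ graph_on (Icc 0 r) h p)).

Definition rotate (theta : R) (p : R * R) : R * R :=
  (cos theta * fst p - sin theta * snd p, sin theta * fst p + cos theta * snd p).

Definition DC_graph (P : R * R -> Prop) : Prop :=
  exists (theta a b : R) (f : R -> R), a <= b /\ DCR_on (Icc a b) f /\
    forall p, P p <-> exists q, graph_on (Icc a b) f q /\ p = rotate theta q.

(* Over a rational window [a,b] where the horizontal line at a rational height d
   misses S while every vertical fibre of S has a point below d, the highest point
   of S below d traces a continuous curve: closedness of S gives upper, the
   continuous curves of S through each point give lower semicontinuity.  At each
   abscissa the curve takes the value of one of the finitely many DC functions f_i,
   and a continuous selection of finitely many DC functions is DC (by induction on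
   their number, building a convex control function that convexifies every such
   selection).  Every point of S lies on one of these countably many curves. *)

From Stdlib Require Import Reals Lra Lia List Classical ClassicalEpsilon Cantor Wf_nat.
Open Scope R_scope.

Lemma continuity_pt_of_eps_delta f x :
  (forall eps, 0 < eps -> exists d, 0 < d /\
     forall y, Rabs (y - x) < d -> Rabs (f y - f x) < eps) ->
  continuity_pt f x.
Proof.
  intros H eps Heps. destruct (H eps Heps) as [d [Hd Hy]].
  exists d; split; [lra|]. intros y [_ Hyx]. exact (Hy y Hyx).
Qed.

Lemma eps_delta_of_continuity_pt f x : continuity_pt f x ->
  forall eps, 0 < eps -> exists d, 0 < d /\
    forall y, Rabs (y - x) < d -> Rabs (f y - f x) < eps.
Proof.
  intros H eps Heps. destruct (H eps Heps) as [d [Hd Hy]].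
  exists d; split; [lra|]. intros y Hyx.
  destruct (Req_dec y x) as [->|Hne].
  - rewrite Rminus_diag, Rabs_R0; lra.
  - apply (Hy y). split; [split; [exact I|auto]|exact Hyx].
Qed.

Definition slope (g : R -> R) (u v : R) : R := (g v - g u) / (v - u).

Lemma Rdiv_le_cross a b c d : 0 < b -> 0 < d -> a * d <= c * b -> a / b <= c / d.
Proof.
  intros Hb Hd H.
  replace (a / b) with (a * d * / (b * d)) by (field; lra).
  replace (c / d) with (c * b * / (b * d)) by (field; lra).
  apply Rmult_le_compat_r; [left; apply Rinv_0_lt_compat; nra | exact H].
Qed.

Lemma convex_between g u v w : convex_R g -> u <= v <= w -> u < w ->
  g v * (w - u) <= (w - v) * g u + (v - u) * g w.
Proof.
  intros Hg Hv Huw.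
  assert (Ht : 0 <= (w - v) / (w - u) <= 1).
  { split.
    - unfold Rdiv; apply Rmult_le_pos; [lra | left; apply Rinv_0_lt_compat; lra].
    - apply Rmult_le_reg_r with (w - u); [lra|].
      unfold Rdiv; rewrite Rmult_assoc, Rinv_l; lra. }
  pose proof (Hg u w _ Ht) as Hc.
  replace ((w - v) / (w - u) * u + (1 - (w - v) / (w - u)) * w) with v in Hc by (field; lra).
  apply (Rmult_le_compat_r (w - u)) in Hc; [|lra].
  replace (((w - v) / (w - u) * g u + (1 - (w - v) / (w - u)) * g w) * (w - u))
    with ((w - v) * g u + (v - u) * g w) in Hc by (field; lra).
  exact Hc.
Qed.

Lemma convex_slope_le g u v w : convex_R g -> u < v < w ->
  slope g u v <= slope g u w /\ slope g u w <= slope g v w.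
Proof.
  intros Hg Hv. pose proof (convex_between g u v w Hg ltac:(lra) ltac:(lra)).
  unfold slope; split; apply Rdiv_le_cross; nra.
Qed.

Lemma convex_slope_mono g u v u' v' : convex_R g ->
  u < v -> u' < v' -> u <= u' -> v <= v' -> slope g u v <= slope g u' v'.
Proof.
  intros Hg Huv Hu'v' Hu Hv.
  apply Rle_trans with (slope g u v').
  - destruct (Req_dec v v') as [<-|]; [lra|].
    apply (convex_slope_le g u v v'); auto; lra.
  - destruct (Req_dec u u') as [<-|]; [lra|].
    apply (convex_slope_le g u u' v'); auto; lra.
Qed.

Lemma convex_lipschitz_near g x y : convex_R g -> Rabs (y - x) <= 1 ->
  Rabs (g y - g x) <= (Rabs (slope g (x - 1) x) + Rabs (slope g x (x + 1))) * Rabs (y - x).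
Proof.
  intros Hg Hy. pose proof (Rle_abs (y - x)). pose proof (Rle_abs (- (y - x))).
  rewrite Rabs_Ropp in *.
  set (K := Rabs (slope g (x - 1) x) + Rabs (slope g x (x + 1))).
  assert (Hslope : forall u v, u < v -> x - 1 <= u <= x -> x <= v <= x + 1 ->
            Rabs (slope g u v) <= K).
  { intros u v Huv Hu Hv.
    pose proof (convex_slope_mono g (x - 1) x u v Hg ltac:(lra) Huv ltac:(lra) ltac:(lra)).
    pose proof (convex_slope_mono g u v x (x + 1) Hg Huv ltac:(lra) ltac:(lra) ltac:(lra)).
    pose proof (Rle_abs (slope g x (x + 1))). pose proof (Rabs_pos (slope g x (x + 1))).
    pose proof (Rle_abs (- slope g (x - 1) x)). pose proof (Rabs_pos (slope g (x - 1) x)).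
    rewrite Rabs_Ropp in *.
    unfold K. apply Rabs_le. lra. }
  destruct (Rtotal_order y x) as [Hlt|[->|Hgt]].
  - replace (g y - g x) with (slope g y x * (y - x)) by (unfold slope; field; lra).
    rewrite Rabs_mult. apply Rmult_le_compat_r; [apply Rabs_pos | apply Hslope; lra].
  - rewrite !Rminus_diag, Rabs_R0. lra.
  - replace (g y - g x) with (slope g x y * (y - x)) by (unfold slope; field; lra).
    rewrite Rabs_mult. apply Rmult_le_compat_r; [apply Rabs_pos | apply Hslope; lra].
Qed.

Lemma convex_continuous g x : convex_R g -> continuity_pt g x.
Proof.
  intro Hg. apply continuity_pt_of_eps_delta. intros eps Heps.
  set (K := Rabs (slope g (x - 1) x) + Rabs (slope g x (x + 1))).
  assert (HK : 0 <= K) by (unfold K; pose proof (Rabs_pos (slope g (x - 1) x));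
                           pose proof (Rabs_pos (slope g x (x + 1))); lra).
  exists (Rmin 1 (eps / (K + 1))).
  split; [apply Rmin_pos; [lra | apply Rdiv_lt_0_compat; lra]|].
  intros y Hy.
  pose proof (Rmin_l 1 (eps / (K + 1))). pose proof (Rmin_r 1 (eps / (K + 1))).
  pose proof (convex_lipschitz_near g x y Hg ltac:(lra)) as Hlip. fold K in Hlip.
  assert (Hsmall : (K + 1) * Rabs (y - x) < eps).
  { assert (Hy' : Rabs (y - x) < eps / (K + 1)) by lra.
    apply Rmult_lt_compat_l with (r := K + 1) in Hy'; [|lra].
    replace ((K + 1) * (eps / (K + 1))) with eps in Hy' by (field; lra). exact Hy'. }
  pose proof (Rabs_pos (y - x)). nra.
Qed.

Definition convex_on (a b : R) (f : R -> R) : Prop :=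
  forall x y t, a <= x <= b -> a <= y <= b -> 0 <= t <= 1 ->
    f (t * x + (1 - t) * y) <= t * f x + (1 - t) * f y.

Lemma convex_on_of_convex a b f : convex_R f -> convex_on a b f.
Proof. intros H x y t _ _ Ht. exact (H x y t Ht). Qed.

Lemma convex_of_convex_on f : (forall a b, convex_on a b f) -> convex_R f.
Proof.
  intros H x y t Ht.
  apply (H (Rmin x y) (Rmax x y)); auto;
    split; auto using Rmin_l, Rmin_r, Rmax_l, Rmax_r.
Qed.

Lemma convex_on_plus a b f g : convex_on a b f -> convex_on a b g ->
  convex_on a b (fun x => f x + g x).
Proof.
  intros Hf Hg x y t Hx Hy Ht.
  pose proof (Hf x y t Hx Hy Ht). pose proof (Hg x y t Hx Hy Ht). lra.
Qed.

Lemma convex_on_ext a b f g : (forall x, f x = g x) -> convex_on a b f -> convex_on a b g.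
Proof. intros E H x y t Hx Hy Ht. rewrite <- !E. exact (H x y t Hx Hy Ht). Qed.

Lemma convex_plus f g : convex_R f -> convex_R g -> convex_R (fun x => f x + g x).
Proof.
  intros Hf Hg. apply convex_of_convex_on. intros a b.
  apply convex_on_plus; apply convex_on_of_convex; assumption.
Qed.

Lemma convex_ext f g : (forall x, f x = g x) -> convex_R f -> convex_R g.
Proof. intros E H x y t Ht. rewrite <- !E. exact (H x y t Ht). Qed.

Lemma convex_const c : convex_R (fun _ => c).
Proof. intros x y t Ht. lra. Qed.

Lemma convex_max f g : convex_R f -> convex_R g -> convex_R (fun x => Rmax (f x) (g x)).
Proof.
  intros Hf Hg x y t Ht. pose proof (Hf x y t Ht). pose proof (Hg x y t Ht).
  pose proof (Rmax_l (f x) (g x)). pose proof (Rmax_r (f x) (g x)).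
  pose proof (Rmax_l (f y) (g y)). pose proof (Rmax_r (f y) (g y)).
  apply Rmax_lub; nra.
Qed.

Lemma continuous_rightmost_max phi x y : x <= y -> (forall z, continuity_pt phi z) ->
  exists s, x <= s <= y /\ (forall z, x <= z <= y -> phi z <= phi s) /\
    (forall z, s < z <= y -> phi z < phi s).
Proof.
  intros Hxy Hphi.
  destruct (continuity_ab_maj phi x y Hxy (fun z _ => Hphi z)) as [zm [Hmax Hzm]].
  set (M := phi zm).
  set (E := fun z => x <= z <= y /\ phi z = M).
  destruct (completeness E) as [s [Hub Hlub]].
  { exists y. intros z [Hz _]. lra. }
  { exists zm. split; auto. }
  assert (Hzs : zm <= s) by (apply Hub; split; auto).
  assert (Hsy : s <= y) by (apply Hlub; intros z [Hz _]; lra).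
  assert (Hs : phi s = M).
  { destruct (Rle_lt_or_eq_dec (phi s) M) as [Hlt|Heq]; [apply Hmax; lra| |exact Heq].
    exfalso.
    destruct (eps_delta_of_continuity_pt phi s (Hphi s) (M - phi s)) as [d [Hd Hnear]]; [lra|].
    enough (Hbound : is_upper_bound E (s - d / 2)) by (pose proof (Hlub _ Hbound); lra).
    intros z [Hz Hpz].
    destruct (Rle_or_lt z (s - d / 2)) as [|Hzs']; [assumption|].
    assert (z <= s) by (apply Hub; split; auto).
    assert (Hzd : Rabs (z - s) < d) by (apply Rabs_def1; lra).
    pose proof (Hnear z Hzd) as Hk. apply Rabs_def2 in Hk. lra. }
  exists s. split; [lra|]. rewrite Hs. split; [exact Hmax|].
  intros z Hz. destruct (Rle_lt_or_eq_dec (phi z) M) as [|Heq]; [apply Hmax; lra|assumption|].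
  assert (z <= s) by (apply Hub; split; [lra|exact Heq]). lra.
Qed.

Lemma convex_on_of_ordered a b f :
  (forall x y t, a <= x -> x < y -> y <= b -> 0 <= t <= 1 ->
     f (t * x + (1 - t) * y) <= t * f x + (1 - t) * f y) ->
  convex_on a b f.
Proof.
  intros Hlt x y t Hx Hy Ht. destruct (Rtotal_order x y) as [|[<-|]].
  - apply Hlt; lra.
  - replace (t * x + (1 - t) * x) with x by ring. lra.
  - replace (t * x + (1 - t) * y) with ((1 - t) * y + (1 - (1 - t)) * x) by ring.
    replace (t * f x + (1 - t) * f y) with ((1 - t) * f y + (1 - (1 - t)) * f x) by ring.
    apply Hlt; lra.
Qed.

Lemma convex_on_subinterval a b a' b' f : a <= a' -> b' <= b ->
  convex_on a b f -> convex_on a' b' f.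
Proof. intros Ha Hb Hf x y t Hx Hy Ht. apply Hf; [lra | lra | exact Ht]. Qed.

Lemma convex_on_scale_affine a b f c m q : 0 <= c -> convex_on a b f ->
  convex_on a b (fun z => c * f z + m * z + q).
Proof.
  intros Hc Hf x y t Hx Hy Ht.
  pose proof (Rmult_le_compat_l c _ _ Hc (Hf x y t Hx Hy Ht)). nra.
Qed.

Lemma convex_on_no_strict_right_max a b s phi : convex_on a b phi -> a < s < b ->
  (forall z, a <= z <= s -> phi z <= phi s) -> (forall z, s < z <= b -> phi z < phi s) ->
  False.
Proof.
  intros Hphi Hs Hleft Hright.
  pose proof (Rmin_l (s - a) (b - s)). pose proof (Rmin_r (s - a) (b - s)).
  set (e := Rmin (s - a) (b - s)) in *.
  assert (He : 0 < e) by (apply Rmin_pos; lra).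
  pose proof (Hphi (s - e) (s + e) (1 / 2) ltac:(lra) ltac:(lra) ltac:(lra)) as Hmid.
  replace (1 / 2 * (s - e) + (1 - 1 / 2) * (s + e)) with s in Hmid by field.
  pose proof (Hleft (s - e) ltac:(lra)). pose proof (Hright (s + e) ltac:(lra)). lra.
Qed.

(* At the rightmost maximum of the gap between [f] and a violated chord, neither
   local alternative can hold. *)
Lemma convex_on_of_local a b f :
  (forall x, continuity_pt f x) ->
  (forall x, a <= x <= b ->
     (exists g, convex_R g /\ g x = f x /\ forall y, a <= y <= b -> g y <= f y) \/
     (exists d, 0 < d /\ convex_on (Rmax a (x - d)) (Rmin b (x + d)) f)) ->
  convex_on a b f.
Proof.
  intros Hf Hloc. apply convex_on_of_ordered. intros x y t Hax Hxy Hyb Ht.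
  apply Rnot_lt_le. intro Hbad.
  set (gap := fun z => (y - x) * f z + (f x - f y) * z + (x * f y - y * f x)).
  assert (Hgap : forall z, continuity_pt gap z) by (intro z; unfold gap; reg; apply Hf).
  assert (Hz0in : x <= t * x + (1 - t) * y <= y) by (split; nra).
  assert (Hz0 : 0 < gap (t * x + (1 - t) * y)).
  { replace (gap (t * x + (1 - t) * y))
      with ((y - x) * (f (t * x + (1 - t) * y) - (t * f x + (1 - t) * f y)))
      by (unfold gap; ring).
    apply Rmult_lt_0_compat; lra. }
  destruct (continuous_rightmost_max gap x y ltac:(lra) Hgap) as [s [Hs [Hmax Hright]]].
  assert (HM : 0 < gap s) by (pose proof (Hmax _ Hz0in); lra).
  assert (Hxs : x < s) by (destruct (Req_dec s x) as [->|]; [unfold gap in HM; nra | lra]).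
  assert (Hsy : s < y) by (destruct (Req_dec s y) as [->|]; [unfold gap in HM; nra | lra]).
  destruct (Hloc s ltac:(lra)) as [[g [Hg [Hgs Hgf]]]|[d [Hd Hconv]]].
  - pose proof (convex_between g x s y Hg ltac:(lra) ltac:(lra)).
    pose proof (Rmult_le_compat_l (y - s) _ _ ltac:(lra) (Hgf x ltac:(lra))).
    pose proof (Rmult_le_compat_l (s - x) _ _ ltac:(lra) (Hgf y ltac:(lra))).
    unfold gap in HM. rewrite <- Hgs in HM. nra.
  - pose proof (Rmax_l x (s - d)). pose proof (Rmax_r x (s - d)).
    pose proof (Rmin_l y (s + d)). pose proof (Rmin_r y (s + d)).
    apply (convex_on_no_strict_right_max (Rmax x (s - d)) (Rmin y (s + d)) s gap).
    + apply convex_on_scale_affine; [lra|].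
      apply (convex_on_subinterval (Rmax a (s - d)) (Rmin b (s + d)));
        [apply Rmax_lub | apply Rmin_glb | exact Hconv]; lra.
    + split; [apply Rmax_lub_lt | apply Rmin_glb_lt]; lra.
    + intros z Hz. apply Hmax. lra.
    + intros z Hz. apply Hright. lra.
Qed.

Lemma DC_continuous F x : DC_R F -> continuity_pt F x.
Proof.
  intros [g [h [Hg [Hh E]]]].
  apply continuity_pt_locally_ext with (fun x => g x - h x) 1; [lra | intros; symmetry; apply E|].
  apply continuity_pt_minus; apply convex_continuous; assumption.
Qed.

Lemma DC_const c : DC_R (fun _ => c).
Proof. exists (fun _ => c), (fun _ => 0). repeat split; try apply convex_const. intro; ring. Qed.

(* min (g1 - h1) (g2 - h2) = (g1 + g2) - max (h1 + g2) (h2 + g1) *)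
Lemma DC_min F G : DC_R F -> DC_R G -> DC_R (fun x => Rmin (F x) (G x)).
Proof.
  intros [g1 [h1 [Hg1 [Hh1 E1]]]] [g2 [h2 [Hg2 [Hh2 E2]]]].
  exists (fun x => g1 x + g2 x), (fun x => Rmax (h1 x + g2 x) (h2 x + g1 x)).
  split; [apply convex_plus; auto|].
  split; [apply convex_max; apply convex_plus; auto|].
  intro x. rewrite E1, E2. unfold Rmin, Rmax.
  destruct (Rle_dec (g1 x - h1 x) (g2 x - h2 x)), (Rle_dec (h1 x + g2 x) (h2 x + g1 x)); lra.
Qed.

Lemma continuous_neq_near f g x : continuity_pt f x -> continuity_pt g x -> f x <> g x ->
  exists d, 0 < d /\ forall y, Rabs (y - x) < d -> f y <> g y.
Proof.
  intros Hf Hg Hne.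
  destruct (eps_delta_of_continuity_pt (fun y => f y - g y) x (continuity_pt_minus _ _ _ Hf Hg)
              (Rabs (f x - g x))) as [d [Hd Hnear]].
  { apply Rabs_pos_lt. lra. }
  exists d. split; [exact Hd|]. intros y Hy Heq.
  specialize (Hnear y Hy). rewrite Heq, Rminus_diag, Rminus_0_l, Rabs_Ropp in Hnear. lra.
Qed.

Lemma exists_convex_dominating (Q : nat -> (R -> R) -> Prop) (l : list nat) :
  (forall j C, Q j C -> convex_R C) ->
  (forall j, In j l -> exists C, Q j C) ->
  exists D, convex_R D /\
    forall j, In j l -> exists C, Q j C /\ convex_R (fun x => D x - C x).
Proof.
  intros HQ. induction l as [|j l IH]; intros Hex.
  - exists (fun _ => 0). split; [apply convex_const | intros j []].
  - destruct IH as [D [HD HDj]]; [intros; apply Hex; right; assumption|].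
    destruct (Hex j (or_introl eq_refl)) as [Cj HCj].
    exists (fun x => D x + Cj x). split; [apply convex_plus; eauto|].
    intros j' [<-|Hin].
    + exists Cj. split; [exact HCj|]. apply convex_ext with D; [intro; ring | exact HD].
    + destruct (HDj j' Hin) as [C [HC HDC]]. exists C. split; [exact HC|].
      apply convex_ext with (fun x => (D x - C x) + Cj x); [intro; ring|].
      apply convex_plus; eauto.
Qed.

Section Selection.

Variable F : nat -> R -> R.

Definition min_over (i0 : nat) (l : list nat) (x : R) : R :=
  fold_right (fun j m => Rmin (F j x) m) (F i0 x) l.

Lemma min_over_le i0 l i x : In i (i0 :: l) -> min_over i0 l x <= F i x.
Proof.
  induction l as [|j l IH]; simpl.
  - intros [->|[]]. lra.
  - intros [->|[->|Hin]].
    + eapply Rle_trans; [apply Rmin_r | apply IH; left; reflexivity].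
    + apply Rmin_l.
    + eapply Rle_trans; [apply Rmin_r | apply IH; right; exact Hin].
Qed.

Lemma min_over_eq i0 l x v : (forall i, In i (i0 :: l) -> F i x = v) -> min_over i0 l x = v.
Proof.
  induction l as [|j l IH]; simpl; intros H.
  - apply H; left; reflexivity.
  - rewrite IH, H; [apply Rmin_left; lra | tauto |].
    intros i Hi. apply H. simpl in Hi. tauto.
Qed.

Lemma DC_min_over i0 l : (forall i, In i (i0 :: l) -> DC_R (F i)) -> DC_R (min_over i0 l).
Proof.
  induction l as [|j l IH]; simpl; intros H.
  - apply H; left; reflexivity.
  - apply DC_min; [apply H; right; left; reflexivity|].
    apply IH. simpl in *. intros i Hi. apply H; tauto.
Qed.

Definition selection_control (l : list nat) (C : R -> R) : Prop :=
  convex_R C /\ forall a b h, (forall x, continuity_pt h x) ->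
    (forall x, a <= x <= b -> exists i, In i l /\ h x = F i x) ->
    convex_on a b (fun x => C x + h x).

Lemma selection_remove_near l j h a b x d : 0 < d ->
  (forall y, Rabs (y - x) < d -> F j y <> h y) ->
  (forall y, a <= y <= b -> exists i, In i l /\ h y = F i y) ->
  forall y, Rmax a (x - d / 2) <= y <= Rmin b (x + d / 2) ->
    exists i, In i (remove Nat.eq_dec j l) /\ h y = F i y.
Proof.
  intros Hd Hneq Hsel y Hy.
  pose proof (Rmax_l a (x - d / 2)). pose proof (Rmax_r a (x - d / 2)).
  pose proof (Rmin_l b (x + d / 2)). pose proof (Rmin_r b (x + d / 2)).
  destruct (Hsel y ltac:(lra)) as [i [Hi Ei]].
  exists i. split; [|exact Ei]. apply in_in_remove; [|exact Hi].
  intros ->. apply (Hneq y); [apply Rabs_def1; lra | symmetry; exact Ei].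
Qed.

(* The control is [q + D], where [p - q] is the minimum of the family and [D - C_j] is
   convex for a control [C_j] of the family without [j].  Where [h] differs from some
   [F j], it locally selects from that smaller family, so
   [q + D + h = (q + D - C_j) + (C_j + h)] is locally convex; where [h] meets every
   [F j], it dominates [p - q] on [a,b] with equality there, so the convex [p + D]
   supports [q + D + h]. *)
Lemma selection_control_exists l :
  (forall i, In i l -> DC_R (F i)) -> exists C, selection_control l C.
Proof.
  induction l as [l IH] using (induction_ltof1 _ (@length nat)). intros HDC.
  destruct l as [|i0 l'].
  { exists (fun _ => 0). split; [apply convex_const|].
    intros a b h _ Hsel x y t Hx. destruct (Hsel x Hx) as [i [[] _]]. }
  set (l := i0 :: l') in *.
  destruct (exists_convex_dominating (fun j => selection_control (remove Nat.eq_dec j l)) l)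
    as [D [HD HDj]].
  { intros j C [HC _]. exact HC. }
  { intros j Hj. apply IH.
    - apply remove_length_lt. exact Hj.
    - intros i Hi. apply in_remove in Hi. apply HDC, Hi. }
  destruct (DC_min_over i0 l' HDC) as [p [q [Hp [Hq Epq]]]].
  exists (fun x => q x + D x). split; [apply convex_plus; assumption|].
  intros a b h Hh Hsel. apply convex_on_of_local.
  { intro x. apply continuity_pt_plus; [apply continuity_pt_plus|];
      auto using convex_continuous. }
  intros x Hx.
  destruct (classic (exists j, In j l /\ F j x <> h x)) as [[j [Hj Hne]]|Hall].
  - right.
    destruct (HDj j Hj) as [Cj [[HCj HCjsel] HDCj]].
    destruct (continuous_neq_near (F j) h x (DC_continuous _ _ (HDC j Hj)) (Hh x) Hne)
      as [d [Hd Hneq]].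
    exists (d / 2). split; [lra|].
    apply convex_on_ext with (fun y => (q y + (D y - Cj y)) + (Cj y + h y)); [intro; ring|].
    apply convex_on_plus; [apply convex_on_of_convex, convex_plus; assumption|].
    apply HCjsel; [exact Hh|]. exact (selection_remove_near l j h a b x d Hd Hneq Hsel).
  - left. exists (fun y => q y + D y + min_over i0 l' y).
    split; [apply convex_ext with (fun y => p y + D y); [intro; rewrite Epq; ring|];
            apply convex_plus; assumption|].
    split.
    + rewrite (min_over_eq i0 l' x (h x)); [reflexivity|].
      intros i Hi. apply NNPP. intro Hneq. apply Hall. exists i. split; assumption.
    + intros y Hy. destruct (Hsel y Hy) as [i [Hi Ei]].
      pose proof (min_over_le i0 l' i y Hi). lra.
Qed.

Lemma DC_of_continuous_selection l h :
  (forall i, In i l -> DC_R (F i)) ->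
  (forall x, continuity_pt h x) ->
  (forall x, exists i, In i l /\ h x = F i x) ->
  DC_R h.
Proof.
  intros HDC Hh Hsel.
  destruct (selection_control_exists l HDC) as [C [HC HCsel]].
  exists (fun x => C x + h x), C. split; [|split; [exact HC | intro; ring]].
  apply convex_of_convex_on. intros a b. apply HCsel; [exact Hh|].
  intros x _. apply Hsel.
Qed.

End Selection.

Lemma exists_max_of_finite (P : R -> Prop) (l : list R) :
  (forall w, P w -> In w l) -> (exists w, P w) -> exists m, P m /\ forall w, P w -> w <= m.
Proof.
  revert P. induction l as [|a l IH]; intros P Hin [w0 Hw0].
  - destruct (Hin w0 Hw0).
  - destruct (classic (exists w, P w /\ w <> a)) as [Hother|Honly].
    + destruct (IH (fun w => P w /\ w <> a)) as [m [[Pm _] Hm]]; [|exact Hother|].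
      { intros w [Pw Hne]. destruct (Hin w Pw) as [->|]; [contradiction | assumption]. }
      destruct (classic (P a)) as [Pa|nPa].
      * exists (Rmax m a). split; [unfold Rmax; destruct Rle_dec; assumption|].
        intros w Pw. destruct (Req_dec w a) as [->|Hne]; [apply Rmax_r|].
        apply Rle_trans with m; [apply Hm; split; assumption | apply Rmax_l].
      * exists m. split; [exact Pm|]. intros w Pw.
        apply Hm. split; [exact Pw|]. intros ->. contradiction.
    + assert (Hall : forall w, P w -> w = a).
      { intros w Pw. apply NNPP. intro Hne. apply Honly. exists w. split; assumption. }
      exists w0. split; [exact Hw0|]. intros w Pw. rewrite (Hall w Pw), (Hall w0 Hw0). lra.
Qed.

Lemma exists_gap_above (y0 : R) (l : list R) :
  exists e, y0 < e /\ forall w, In w l -> y0 < w -> e < w.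
Proof.
  induction l as [|a l [e [He Hgap]]].
  - exists (y0 + 1). split; [lra | intros w []].
  - destruct (Rlt_or_le y0 a) as [Ha|Ha].
    + exists (Rmin e ((y0 + a) / 2)). split; [apply Rmin_glb_lt; lra|].
      pose proof (Rmin_l e ((y0 + a) / 2)). pose proof (Rmin_r e ((y0 + a) / 2)).
      intros w [<-|Hw] Hyw; [lra|]. pose proof (Hgap w Hw Hyw). lra.
    + exists e. split; [exact He|]. intros w [<-|Hw] Hyw; [lra | exact (Hgap w Hw Hyw)].
Qed.

Lemma near_forall_lt (x0 : R) (k : nat) (Q : nat -> R -> Prop) :
  (forall i, (i < k)%nat -> exists d, 0 < d /\ forall y, Rabs (y - x0) < d -> Q i y) ->
  exists d, 0 < d /\ forall y, Rabs (y - x0) < d -> forall i, (i < k)%nat -> Q i y.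
Proof.
  induction k as [|k IH]; intros Hnear.
  - exists 1. split; [lra | intros; lia].
  - destruct IH as [d1 [Hd1 H1]]; [intros; apply Hnear; lia|].
    destruct (Hnear k ltac:(lia)) as [d2 [Hd2 H2]].
    exists (Rmin d1 d2). split; [apply Rmin_pos; assumption|].
    pose proof (Rmin_l d1 d2). pose proof (Rmin_r d1 d2).
    intros y Hy i Hi. destruct (Nat.eq_dec i k) as [->|Hne].
    + apply H2. lra.
    + apply H1; [lra | lia].
Qed.

Lemma closed2_box S p : closed2 S -> ~ S p ->
  exists e, 0 < e /\ forall q, Rabs (fst q - fst p) < e -> Rabs (snd q - snd p) < e -> ~ S q.
Proof.
  intros Hcl Hp. destruct (Hcl p Hp) as [e [He Hball]].
  exists (e / 2). split; [lra|]. intros q H1 H2. apply Hball.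
  apply Rabs_def2 in H1. apply Rabs_def2 in H2. simpl. nra.
Qed.

Definition qn (n : nat) : R :=
  let (p, m) := Cantor.of_nat n in
  let (s, t) := Cantor.of_nat p in IZR (Z.of_nat s - Z.of_nat t) / INR (S m).

Lemma qn_dense x y : x < y -> exists n, x < qn n < y.
Proof.
  intro Hxy.
  destruct (INR_archimed (y - x) 1 ltac:(lra)) as [m Hm].
  set (N := INR (S m)).
  assert (HN : 0 < N) by (apply lt_0_INR; lia).
  assert (HNxy : 1 < N * (y - x)) by (unfold N; rewrite S_INR; nra).
  destruct (archimed (x * N)) as [Hup1 Hup2].
  set (z := up (x * N)) in *.
  exists (Cantor.to_nat (Cantor.to_nat (Z.to_nat z, Z.to_nat (- z)), m)).
  unfold qn. rewrite !Cantor.cancel_of_to. fold N.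
  replace (Z.of_nat (Z.to_nat z) - Z.of_nat (Z.to_nat (- z)))%Z with z by lia.
  split; apply (Rmult_lt_reg_r N); auto; unfold Rdiv; rewrite Rmult_assoc, Rinv_l; lra.
Qed.

Lemma continuity_pt_nonexpansive phi x :
  (forall y, Rabs (phi y - phi x) <= Rabs (y - x)) -> continuity_pt phi x.
Proof.
  intro Hphi. apply continuity_pt_of_eps_delta. intros eps Heps.
  exists eps. split; [exact Heps|]. intros y Hy. pose proof (Hphi y). lra.
Qed.

Lemma Rmin_nonexpansive c x y : Rabs (Rmin y c - Rmin x c) <= Rabs (y - x).
Proof.
  pose proof (Rle_abs (y - x)). pose proof (Rle_abs (- (y - x))). rewrite Rabs_Ropp in *.
  apply Rabs_le. unfold Rmin. destruct (Rle_dec y c), (Rle_dec x c); lra.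
Qed.

Lemma Rmax_nonexpansive c x y : Rabs (Rmax y c - Rmax x c) <= Rabs (y - x).
Proof.
  pose proof (Rle_abs (y - x)). pose proof (Rle_abs (- (y - x))). rewrite Rabs_Ropp in *.
  apply Rabs_le. unfold Rmax. destruct (Rle_dec y c), (Rle_dec x c); lra.
Qed.

Definition clamp (al be x : R) : R := Rmin be (Rmax al x).

Lemma clamp_in al be x : al <= be -> al <= clamp al be x <= be.
Proof. intro H. unfold clamp, Rmin, Rmax. repeat destruct Rle_dec; lra. Qed.

Lemma clamp_nonexpansive al be x y : Rabs (clamp al be y - clamp al be x) <= Rabs (y - x).
Proof.
  unfold clamp. rewrite (Rmin_comm be), (Rmin_comm be), (Rmax_comm al), (Rmax_comm al).
  eapply Rle_trans; [apply Rmin_nonexpansive | apply Rmax_nonexpansive].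
Qed.

Lemma continuous_glue al be u g1 g2 : al <= be -> continuous_on_Icc al be u ->
  (forall x, continuity_pt g1 x) -> (forall x, continuity_pt g2 x) ->
  g1 al = u al -> g2 be = u be ->
  exists v, (forall x, continuity_pt v x) /\ (forall x, x < al -> v x = g1 x) /\
    (forall x, al <= x <= be -> v x = u x) /\ (forall x, be < x -> v x = g2 x).
Proof.
  intros Hab Hu Hg1 Hg2 E1 E2.
  exists (fun x => u (clamp al be x) + (g1 (Rmin x al) - g1 al) + (g2 (Rmax x be) - g2 be)).
  split; [|split; [|split]]; intro x.
  - assert (Hclamp : continuity_pt (fun y => u (clamp al be y)) x).
    { apply continuity_pt_of_eps_delta. intros eps Heps.
      destruct (Hu _ (clamp_in al be x Hab) eps Heps) as [d [Hd Hnear]].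
      exists d. split; [exact Hd|]. intros y Hy. apply Hnear; [apply clamp_in; exact Hab|].
      pose proof (clamp_nonexpansive al be x y). lra. }
    apply continuity_pt_plus; [apply continuity_pt_plus; [exact Hclamp|]|];
      apply continuity_pt_minus; try (apply continuity_pt_const; intros ? ?; reflexivity).
    + apply (continuity_pt_comp (fun y => Rmin y al) g1); [|apply Hg1].
      apply continuity_pt_nonexpansive. intro; apply Rmin_nonexpansive.
    + apply (continuity_pt_comp (fun y => Rmax y be) g2); [|apply Hg2].
      apply continuity_pt_nonexpansive. intro; apply Rmax_nonexpansive.
  - intro Hx. unfold clamp.
    rewrite (Rmin_left x al), (Rmax_right x be), (Rmax_left al x), (Rmin_right be al) by lra.
    lra.
  - intro Hx. unfold clamp.
    rewrite (Rmax_right al x), (Rmin_right be x), (Rmin_right x al), (Rmax_right x be) by lra.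
    lra.
  - intro Hx. unfold clamp.
    rewrite (Rmin_right x al), (Rmax_left x be), (Rmax_right al x), (Rmin_left be x) by lra.
    lra.
Qed.

Lemma rotate_0 p : rotate 0 p = p.
Proof. destruct p. unfold rotate. rewrite cos_0, sin_0. simpl. f_equal; ring. Qed.

Lemma DC_graph_of_graph a b f : a <= b -> DCR_on (Icc a b) f -> DC_graph (graph_on (Icc a b) f).
Proof.
  intros Hab Hf. exists 0, a, b, f. split; [exact Hab|]. split; [exact Hf|].
  intro p. split.
  - intro Hp. exists p. rewrite rotate_0. split; [exact Hp | reflexivity].
  - intros [q [Hq ->]]. rewrite rotate_0. exact Hq.
Qed.

Lemma DC_graph_singleton p0 : DC_graph (fun p => p = p0).
Proof.
  destruct p0 as [x0 y0]. exists 0, x0, x0, (fun _ => y0). split; [lra|].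
  split; [exists (fun _ => y0); split; [apply DC_const | reflexivity]|].
  intros p. split.
  - intros ->. exists (x0, y0). rewrite rotate_0.
    split; [split; [unfold Icc; simpl; lra | reflexivity] | reflexivity].
  - intros [[x y] [[Hx Hy] ->]]. rewrite rotate_0. unfold Icc in Hx. simpl in *. f_equal; lra.
Qed.

Lemma DC_extensions_choice (D : R -> Prop) (k : nat) (f : nat -> R -> R) :
  (forall i, (i < k)%nat -> DCR_on D (f i)) ->
  exists F, forall i, (i < k)%nat -> DC_R (F i) /\ forall x, D x -> f i x = F i x.
Proof.
  intro Hf.
  exists (fun i => epsilon (inhabits (fun _ => 0))
                    (fun G => DC_R G /\ forall x, D x -> f i x = G x)).
  intros i Hi. apply epsilon_spec, Hf, Hi.
Qed.

Section Covering.

Variables (S : R * R -> Prop) (r : R) (k : nat) (F : nat -> R -> R) (p0 : R * R).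

Hypothesis S_p0 : S p0.
Hypothesis S_closed : closed2 S.
Hypothesis F_DC : forall i, (i < k)%nat -> DC_R (F i).
Hypothesis S_in_graphs :
  forall p, S p -> 0 <= fst p <= r /\ exists i, (i < k)%nat /\ snd p = F i (fst p).
Hypothesis S_through : forall p, S p ->
  exists h, continuous_on_Icc 0 r h /\ h (fst p) = snd p /\ forall y, 0 <= y <= r -> S (y, h y).

Lemma F_continuous i x : (i < k)%nat -> continuity_pt (F i) x.
Proof. intro Hi. apply DC_continuous, F_DC, Hi. Qed.

Definition fiber_values (y : R) : list R := map (fun i => F i y) (seq 0 k).

Lemma in_fiber_values y v : S (y, v) -> In v (fiber_values y).
Proof.
  intro Hv. destruct (S_in_graphs _ Hv) as [_ [i [Hi E]]].
  apply in_map_iff. exists i. split; [symmetry; exact E | apply in_seq; lia].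
Qed.

Definition highest_below (d y : R) : R :=
  epsilon (inhabits 0) (fun v => S (y, v) /\ v < d /\ forall w, S (y, w) -> w < d -> w <= v).

Lemma highest_below_spec d y : (exists v, S (y, v) /\ v < d) ->
  S (y, highest_below d y) /\ highest_below d y < d /\
  forall w, S (y, w) -> w < d -> w <= highest_below d y.
Proof.
  intro Hex. unfold highest_below. apply epsilon_spec.
  destruct (exists_max_of_finite (fun w => S (y, w) /\ w < d) (fiber_values y))
    as [m [[Hm Hmd] Hmax]]; [intros w [Hw _]; apply in_fiber_values, Hw | exact Hex |].
  exists m. auto.
Qed.

Definition clear_level (al be d : R) : Prop :=
  al <= be /\ (forall y, al <= y <= be -> exists v, S (y, v) /\ v < d) /\
  (forall y, al <= y <= be -> ~ S (y, d)).

Lemma branch_below_level_near i x0 d v0 eps : (i < k)%nat -> 0 < eps -> ~ S (x0, d) ->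
  (forall w, S (x0, w) -> w < d -> w <= v0) ->
  exists delta, 0 < delta /\ forall y, Rabs (y - x0) < delta ->
    S (y, F i y) -> F i y < d -> F i y < v0 + eps.
Proof.
  intros Hi Heps Hd Hmax.
  pose proof (eps_delta_of_continuity_pt _ _ (F_continuous i x0 Hi)) as Hc.
  destruct (Rlt_or_le (F i x0) (v0 + eps)) as [Hlow|Hlow].
  { destruct (Hc (v0 + eps - F i x0)) as [delta [Hdelta Hnear]]; [lra|].
    exists delta. split; [exact Hdelta|]. intros y Hy _ _.
    pose proof (Hnear y Hy) as Hk. apply Rabs_def2 in Hk. lra. }
  destruct (Rlt_or_le d (F i x0)) as [Hhigh|Hhigh].
  { destruct (Hc (F i x0 - d)) as [delta [Hdelta Hnear]]; [lra|].
    exists delta. split; [exact Hdelta|]. intros y Hy _ Hyd.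
    pose proof (Hnear y Hy) as Hk. apply Rabs_def2 in Hk. lra. }
  assert (Hout : ~ S (x0, F i x0)).
  { intro HS. destruct (Rle_lt_or_eq_dec _ _ Hhigh) as [Hlt|Heq].
    - pose proof (Hmax _ HS Hlt). lra.
    - rewrite Heq in HS. exact (Hd HS). }
  destruct (closed2_box S _ S_closed Hout) as [e [He Hbox]]. simpl in Hbox.
  destruct (Hc e He) as [delta [Hdelta Hnear]].
  exists (Rmin delta e). split; [apply Rmin_pos; assumption|].
  pose proof (Rmin_l delta e). pose proof (Rmin_r delta e).
  intros y Hy HSy _. exfalso.
  apply (Hbox (y, F i y)); [simpl; lra | apply Hnear; lra | exact HSy].
Qed.

Lemma highest_below_continuous al be d :
  clear_level al be d -> continuous_on_Icc al be (highest_below d).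
Proof.
  intros [Hab [Hex Hclear]] x0 Hx0 eps Heps.
  destruct (highest_below_spec d x0 (Hex x0 Hx0)) as [HS0 [Hlt0 Hmax0]].
  set (v0 := highest_below d x0) in *.
  destruct (S_through _ HS0) as [h [Hh [Hh0 HhS]]]. simpl in Hh0.
  destruct (S_in_graphs _ HS0) as [Hx0r _]. simpl in Hx0r.
  destruct (Hh x0 Hx0r (Rmin eps (d - v0))) as [d1 [Hd1 Hnear1]]; [apply Rmin_pos; lra|].
  destruct (near_forall_lt x0 k (fun i y => S (y, F i y) -> F i y < d -> F i y < v0 + eps))
    as [d2 [Hd2 Hnear2]].
  { intros i Hi. apply branch_below_level_near; auto. }
  exists (Rmin d1 d2). split; [apply Rmin_pos; assumption|].
  intros y Hy Hyx.
  pose proof (Rmin_l d1 d2). pose proof (Rmin_r d1 d2).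
  pose proof (Rmin_l eps (d - v0)). pose proof (Rmin_r eps (d - v0)).
  destruct (highest_below_spec d y (Hex y Hy)) as [HSy [Hlty Hmaxy]].
  destruct (S_in_graphs _ HSy) as [Hyr [i [Hi Ei]]]. simpl in Hyr, Ei.
  pose proof (Hnear1 y Hyr ltac:(lra)) as Hhy. rewrite Hh0 in Hhy. apply Rabs_def2 in Hhy.
  assert (Hlower : h y <= highest_below d y) by (apply Hmaxy; [apply HhS, Hyr | lra]).
  assert (Hupper : highest_below d y < v0 + eps).
  { rewrite Ei in *. apply (Hnear2 y ltac:(lra) i Hi); assumption. }
  apply Rabs_def1; lra.
Qed.

(* Extend [highest_below d] beyond [al, be] by the branches it meets at the endpoints;
   the extension is a continuous selection of the [F i], hence DC. *)
Lemma highest_below_DCR al be d :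
  clear_level al be d -> DCR_on (Icc al be) (highest_below d).
Proof.
  intro Hclear.
  pose proof (highest_below_continuous al be d Hclear) as Hcont.
  destruct Hclear as [Hab [Hex _]].
  assert (Hsel : forall y, al <= y <= be -> exists i, (i < k)%nat /\ highest_below d y = F i y).
  { intros y Hy. destruct (highest_below_spec d y (Hex y Hy)) as [HSy _].
    destruct (S_in_graphs _ HSy) as [_ [i [Hi Ei]]]. exists i. split; assumption. }
  destruct (Hsel al ltac:(lra)) as [i0 [Hi0 E0]].
  destruct (Hsel be ltac:(lra)) as [i1 [Hi1 E1]].
  destruct (continuous_glue al be (highest_below d) (F i0) (F i1) Hab Hcont
              (fun x => F_continuous i0 x Hi0) (fun x => F_continuous i1 x Hi1)
              (eq_sym E0) (eq_sym E1)) as [v [Hv [Hleft [Hmid Hright]]]].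
  exists v. split; [|intros x Hx; symmetry; apply Hmid, Hx].
  apply (DC_of_continuous_selection F (seq 0 k)); [|exact Hv|].
  - intros i Hi. apply in_seq in Hi. apply F_DC. lia.
  - intro x. destruct (Rlt_or_le x al) as [Hx|Hx]; [|destruct (Rle_or_lt x be) as [Hx'|Hx']].
    + exists i0. split; [apply in_seq; lia | apply Hleft, Hx].
    + destruct (Hsel x ltac:(lra)) as [i [Hi Ei]].
      exists i. split; [apply in_seq; lia | rewrite Hmid by lra; exact Ei].
    + exists i1. split; [apply in_seq; lia | apply Hright, Hx'].
Qed.

Lemma rational_level_above p : S p ->
  exists n, snd p < qn n /\ ~ S (fst p, qn n) /\ highest_below (qn n) (fst p) = snd p.
Proof.
  destruct p as [x0 y0]. simpl. intro Hp.
  destruct (exists_gap_above y0 (fiber_values x0)) as [e [He Hgap]].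
  destruct (qn_dense y0 e He) as [n [Hyn Hne]].
  assert (Hbetween : forall w, S (x0, w) -> w < qn n -> w <= y0).
  { intros w Hw Hwn. apply Rnot_lt_le. intro Hyw.
    pose proof (Hgap w (in_fiber_values x0 w Hw) Hyw). lra. }
  exists n. split; [exact Hyn|]. split.
  - intro Hn. pose proof (Hgap _ (in_fiber_values _ _ Hn) Hyn). lra.
  - destruct (highest_below_spec (qn n) x0 (ex_intro _ y0 (conj Hp Hyn))) as [HS [Hlt Hmax]].
    pose proof (Hmax y0 Hp Hyn). pose proof (Hbetween _ HS Hlt). lra.
Qed.

Lemma clear_level_near x0 y0 d : S (x0, y0) -> y0 < d -> ~ S (x0, d) ->
  exists rho, 0 < rho /\ forall y, 0 <= y <= r -> Rabs (y - x0) < rho ->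
    (exists v, S (y, v) /\ v < d) /\ ~ S (y, d).
Proof.
  intros Hp Hyd Hd.
  destruct (closed2_box S _ S_closed Hd) as [e [He Hbox]]. simpl in Hbox.
  destruct (S_through _ Hp) as [h [Hh [Hh0 HhS]]]. simpl in Hh0.
  destruct (S_in_graphs _ Hp) as [Hx0 _]. simpl in Hx0.
  destruct (Hh x0 Hx0 (d - y0)) as [delta [Hdelta Hnear]]; [lra|].
  exists (Rmin e delta). split; [apply Rmin_pos; assumption|].
  pose proof (Rmin_l e delta). pose proof (Rmin_r e delta).
  intros y Hy Hyx. split.
  - exists (h y). split; [apply HhS, Hy|].
    pose proof (Hnear y Hy ltac:(lra)) as Hk. rewrite Hh0 in Hk. apply Rabs_def2 in Hk. lra.
  - apply (Hbox (y, d)); simpl; [lra | rewrite Rminus_diag, Rabs_R0; exact He].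
Qed.

Lemma S_covered_by_clear_levels p : S p ->
  exists n1 n2 n3, clear_level (Rmax 0 (qn n1)) (Rmin r (qn n2)) (qn n3) /\
    graph_on (Icc (Rmax 0 (qn n1)) (Rmin r (qn n2))) (highest_below (qn n3)) p.
Proof.
  intro Hp. destruct (rational_level_above p Hp) as [n3 [Hyn [Hn Hhigh]]].
  destruct p as [x0 y0]. simpl in *.
  destruct (S_in_graphs _ Hp) as [Hx0 _]. simpl in Hx0.
  destruct (clear_level_near x0 y0 (qn n3) Hp Hyn Hn) as [rho [Hrho Hnear]].
  destruct (qn_dense (x0 - rho) x0) as [n1 [Ha1 Ha2]]; [lra|].
  destruct (qn_dense x0 (x0 + rho)) as [n2 [Hb1 Hb2]]; [lra|].
  exists n1, n2, n3.
  pose proof (Rmax_l 0 (qn n1)). pose proof (Rmax_r 0 (qn n1)).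
  pose proof (Rmin_l r (qn n2)). pose proof (Rmin_r r (qn n2)).
  assert (Hx0in : Rmax 0 (qn n1) <= x0 <= Rmin r (qn n2))
    by (split; [apply Rmax_lub | apply Rmin_glb]; lra).
  split; [|split; [exact Hx0in | simpl; symmetry; exact Hhigh]].
  split; [lra|]. split; intros y Hy; apply Hnear; try apply Rabs_def1; lra.
Qed.

(* Indices whose window is not clear contribute the point [p0] of [S]. *)
Definition clear_piece (a b d : R) : R * R -> Prop :=
  if excluded_middle_informative (clear_level (Rmax 0 a) (Rmin r b) d)
  then graph_on (Icc (Rmax 0 a) (Rmin r b)) (highest_below d)
  else fun p => p = p0.

Definition clear_piece_of_index (n : nat) : R * R -> Prop :=
  let (n1, m) := Cantor.of_nat n in
  let (n2, n3) := Cantor.of_nat m in clear_piece (qn n1) (qn n2) (qn n3).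

Lemma clear_piece_DC_graph n : DC_graph (clear_piece_of_index n).
Proof.
  unfold clear_piece_of_index, clear_piece.
  destruct (Cantor.of_nat n) as [n1 m], (Cantor.of_nat m) as [n2 n3].
  destruct excluded_middle_informative as [Hclear|_]; [|apply DC_graph_singleton].
  apply DC_graph_of_graph; [apply Hclear | apply highest_below_DCR, Hclear].
Qed.

Lemma S_eq_union_clear_pieces p : S p <-> exists n, clear_piece_of_index n p.
Proof.
  unfold clear_piece_of_index, clear_piece. split.
  - intro Hp. destruct (S_covered_by_clear_levels p Hp) as [n1 [n2 [n3 [Hclear Hgraph]]]].
    exists (Cantor.to_nat (n1, Cantor.to_nat (n2, n3))). rewrite !Cantor.cancel_of_to.
    destruct excluded_middle_informative; [exact Hgraph | contradiction].
  - intros [n Hn]. destruct (Cantor.of_nat n) as [n1 m], (Cantor.of_nat m) as [n2 n3].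
    destruct excluded_middle_informative as [[_ [Hex _]]|_]; [|rewrite Hn; exact S_p0].
    destruct p as [x y], Hn as [Hx Hy]. simpl in *. subst y.
    apply (highest_below_spec (qn n3) x (Hex x Hx)).
Qed.

End Covering.

Theorem corollary5p4 (S : R * R -> Prop) :
  s_set S ->
  exists P : nat -> (R * R -> Prop),
    (forall n, DC_graph (P n)) /\
    (forall p, S p <-> exists n, P n p).
Proof.
  intros [[p0 Hp0] [Hclosed [r [_ [[k [f [Hf Hcover]]] [Hfam [Hfam_cont HS]]]]]]].
  destruct (DC_extensions_choice (Icc 0 r) k f (fun i Hi => proj1 (Hf i Hi))) as [F HF].
  assert (S_in_graphs : forall p, S p ->
            0 <= fst p <= r /\ exists i, (i < k)%nat /\ snd p = F i (fst p)).
  { intros p Hp. destruct (Hcover p Hp) as [i [Hi [Hx Ei]]].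
    split; [exact Hx|]. exists i. split; [exact Hi|]. rewrite Ei. apply HF; assumption. }
  assert (S_through : forall p, S p -> exists h, continuous_on_Icc 0 r h /\
            h (fst p) = snd p /\ forall y, 0 <= y <= r -> S (y, h y)).
  { intros p Hp. destruct (proj1 (HS p) Hp) as [h [Hh [_ Ep]]].
    exists h. split; [apply Hfam_cont, Hh|]. split; [symmetry; exact Ep|].
    intros y Hy. apply HS. exists h. split; [exact Hh|]. split; [exact Hy | reflexivity]. }
  assert (F_DC : forall i, (i < k)%nat -> DC_R (F i)) by (intros; apply HF; assumption).
  exists (clear_piece_of_index S r p0). split.
  - intro n. apply (clear_piece_DC_graph S r k F); assumption.
  - intro p. apply (S_eq_union_clear_pieces S r k F); assumption.
Qed.
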